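(* Let $(\Omega,\mathbb Z^N,\alpha)$ be a dynamical system and $\omega\in\Omega$. Then $L(\omega)=\bigcup_{\eta\in S^{N-1}}L^\eta(\omega)$.
   Context: A dynamical system $(\Omega,\mathbb Z^N,\alpha)$: $\Omega$ compact metric space, $\alpha$ maps $\mathbb Z^N$ to homeomorphisms of $\Omega$ with $\alpha(g+h)=\alpha(g)\circ\alpha(h)$. $g_n\to\infty$ means $(g_n)$ eventually leaves every finite subset of $\mathbb Z^N$. $L(\omega)=\{\nu\in\Omega:\exists g_n\to\infty,\ \alpha(g_n)(\omega)\to\nu\}$. $S^{N-1}=\{\eta\in\mathbb R^N:|\eta|=1\}$. For $R>0$ and an open neighbourhood $U\subseteq S^{N-1}$ of $\eta$, $W_{R,U}:=\{k\in\mathbb Z^N:|k|>R,\ k/|k|\in U\}$. A sequence $(g_n)$ in $\mathbb Z^N$ with $g_n\to\infty$ tends to infinity in direction $\eta$ if for every such $W_{R,U}$ there is $n_0$ with $g_n\in W_{R,U}$ for all $n\ge n_0$. $L^\eta(\omega)=\{\nu\in\Omega:\exists (g_n)$ tending to infinity in direction $\eta$ with $\alpha(g_n)(\omega)\to\nu\}$. *)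

From HB Require Import structures.
From mathcomp Require Import all_boot all_order all_algebra.
From mathcomp Require Import all_classical all_reals all_analysis.
Set Implicit Arguments. Unset Strict Implicit. Unset Printing Implicit Defensive.
Import Order.TTheory GRing.Theory Num.Theory.
Local Open Scope classical_set_scope.
Local Open Scope ring_scope.

Definition eucl {R : realType} {N : nat} (v : 'rV[R]_N) : R :=
  Num.sqrt (\sum_(i < N) v 0 i ^+ 2).

Definition zvec {R : realType} {N : nat} (k : 'rV[int]_N) : 'rV[R]_N :=
  map_mx (fun z : int => z%:~R) k.

Definition usphere (R : realType) (N : nat) : set 'rV[R]_N :=
  [set x | eucl x = 1].
Arguments usphere : clear implicits.

Definition sphere_open {R : realType} {N : nat} (U : set 'rV[R]_N) : Prop :=
  U `<=` usphere R N /\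
  forall x, U x -> exists2 e : R, 0 < e &
    forall y, usphere R N y -> eucl (y - x) < e -> U y.

Definition Wset {R : realType} {N : nat} (r : R) (U : set 'rV[R]_N)
  : set 'rV[int]_N :=
  [set k | r < eucl (zvec k : 'rV[R]_N) /\ U ((eucl (zvec k : 'rV[R]_N))^-1 *: zvec k)].

Definition tends_to_infty {N : nat} (g : nat -> 'rV[int]_N) : Prop :=
  forall F : set 'rV[int]_N, finite_set F -> \forall n \near \oo, ~ F (g n).

Definition tends_in_dir {R : realType} {N : nat} (eta : 'rV[R]_N)
  (g : nat -> 'rV[int]_N) : Prop :=
  tends_to_infty g /\
  forall (r : R) (U : set 'rV[R]_N), 0 < r -> sphere_open U -> U eta ->
    \forall n \near \oo, Wset r U (g n).

Definition Lset {N : nat} {Omega : topologicalType}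
  (alpha : 'rV[int]_N -> Omega -> Omega) (omega : Omega) : set Omega :=
  [set nu | exists g : nat -> 'rV[int]_N,
     tends_to_infty g /\ (fun n => alpha (g n) omega) @ \oo --> nu].

Definition Ldir {R : realType} {N : nat} {Omega : topologicalType}
  (alpha : 'rV[int]_N -> Omega -> Omega) (eta : 'rV[R]_N) (omega : Omega)
  : set Omega :=
  [set nu | exists g : nat -> 'rV[int]_N,
     tends_in_dir eta g /\ (fun n => alpha (g n) omega) @ \oo --> nu].

(* Given g_n -> oo with alpha(g_n) omega -> nu, the directions
   g_n/|g_n| lie in the compact unit sphere, so a subsequence g_{phi n} has
   directions converging to some eta in S^{N-1}.  Since |g_{phi n}| -> oo and
   g_{phi n}/|g_{phi n}| -> eta, the subsequence eventually enters every cone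
   W_{R,U} around eta, i.e. tends to infinity in direction eta, and
   alpha(g_{phi n}) omega still converges to nu. *)

From HB Require Import structures.
From mathcomp Require Import all_boot all_order all_algebra.
From mathcomp Require Import all_classical all_reals all_analysis.
From mathcomp Require Import zify.
Import Order.TTheory GRing.Theory Num.Theory.
Import numFieldNormedType.Exports.
Local Open Scope classical_set_scope.
Local Open Scope ring_scope.

Section Euclidean_norm.
Variables (R : realType) (N : nat).
Implicit Types (v : 'rV[R]_N).

Lemma eucl_ge0 v : 0 <= eucl v.
Proof. exact: sqrtr_ge0. Qed.

Lemma eucl0 : eucl (0 : 'rV[R]_N) = 0.
Proof. by rewrite /eucl big1 ?sqrtr0 // => i _; rewrite mxE expr0n. Qed.

Lemma eucl_coord v i : `|v 0 i| <= eucl v.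
Proof.
rewrite -sqrtr_sqr ler_sqrt; last by apply: sumr_ge0 => j _; exact: sqr_ge0.
by rewrite (bigD1 i) //= lerDl; apply: sumr_ge0 => j _; exact: sqr_ge0.
Qed.

Lemma euclZ c v : eucl (c *: v) = `|c| * eucl v.
Proof.
rewrite /eucl (eq_bigr (fun i => c ^+ 2 * v 0 i ^+ 2)); last first.
  by move=> i _; rewrite mxE exprMn.
by rewrite -mulr_sumr sqrtrM ?sqr_ge0 // sqrtr_sqr.
Qed.

Lemma eucl_normalize v : 0 < eucl v -> eucl ((eucl v)^-1 *: v) = 1.
Proof. by move=> v0; rewrite euclZ ger0_norm ?invr_ge0 ?ltW ?mulVf ?gt_eqF. Qed.

Lemma normalize_coord_le1 v i : `|((eucl v)^-1 *: v) 0 i| <= 1.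
Proof.
have [->|v0] := eqVneq (eucl v) 0; first by rewrite invr0 scale0r mxE normr0.
by rewrite -(@eucl_normalize v) ?eucl_coord // lt_neqAle eq_sym v0 eucl_ge0.
Qed.

Lemma eucl_continuous : continuous (@eucl R N).
Proof.
have sumsq_continuous : continuous (fun v : 'rV[R]_N => \sum_(i < N) v 0 i ^+ 2).
  apply: continuous_big => [|i _ v]; first exact: add_continuous.
  exact: (@continuous_comp _ _ _ (fun M : 'rV[R]_N => M 0 i) (fun x : R => x ^+ 2) v
    (@coord_continuous R 1 N 0 i v) (@exprn_continuous R 2 _)).
move=> v; exact: (@continuous_comp _ _ _ _ Num.sqrt v
  (sumsq_continuous v) (@sqrt_continuous R _)).
Qed.

Lemma closed_usphere : closed (usphere R N).
Proof.
apply: (@preimage_closed _ _ (@eucl R N) [set y | y = 1]); last exact: closed_eq.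
by move=> v _; exact: eucl_continuous.
Qed.

End Euclidean_norm.

Lemma cluster_cvg_subseq (R : realType) (T : pseudoMetricType R)
    (u : nat -> T) (a : T) :
  cluster (u @ \oo) a ->
  exists2 phi : nat -> nat, phi @ \oo --> \oo & u \o phi @ \oo --> a.
Proof.
move=> ua.
have hit (p : nat * nat) : exists n, (p.2 <= n)%N /\ ball a p.1.+1%:R^-1 (u n).
  have tail : (u @ \oo) [set u n | n in [set n | (p.2 <= n)%N]].
    by exists p.2 => // n /= ?; exists n.
  have e0 : 0 < p.1.+1%:R^-1 :> R by rewrite invr_gt0 ltr0n.
  have [_ [[n pn <-] uab]] := ua _ _ tail (nbhsx_ballx a _ e0).
  by exists n.
have [c hc] := choice hit.
pose phi := fix phi k := if k is k'.+1 then c (k, (phi k').+1) else c (0, 0)%N.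
have phi_ge k : (k <= phi k)%N.
  elim: k => [|k IH] //=; have [ck _] := hc (k.+1, (phi k).+1).
  exact: leq_trans ck.
have phi_ball k : ball a k.+1%:R^-1 (u (phi k)).
  by case: k => [|k]; [case: (hc (0, 0)%N) | case: (hc (k.+1, (phi k).+1))].
exists phi.
  move=> A [M _ MA]; exists M => // k /= Mk; apply: MA.
  exact: leq_trans Mk (phi_ge k).
apply/cvg_ballP => e e0; near=> k.
apply: le_ball (phi_ball k); apply: ltW; near: k.
exact: (@near_infty_natSinv_lt R (PosNum e0)).
Unshelve. all: by end_near. Qed.

Section Integer_directions.
Context {R : realType} {N : nat}.
Implicit Types (g : nat -> 'rV[int]_N) (eta : 'rV[R]_N).

Definition zdir (k : 'rV[int]_N) : 'rV[R]_N :=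
  (eucl (zvec k : 'rV[R]_N))^-1 *: zvec k.

Lemma finite_eucl_le (r : R) :
  finite_set [set k : 'rV[int]_N | eucl (zvec k : 'rV[R]_N) <= r].
Proof.
set M := Num.Def.archi_bound `|r|.
have rM : r < M%:R := le_lt_trans (ler_norm r) (archi_boundP (normr_ge0 r)).
pose shift (v : 'rV['I_(M.*2).+1]_N) : 'rV[int]_N :=
  \row_i ((v 0 i : nat)%:Z - M%:Z).
apply: (@sub_finite_set _ _ (shift @` setT)); last exact: finite_image.
move=> k /= kr.
have kM i : `|k 0 i| < M%:Z.
  rewrite -(ltr_int R) intr_norm (le_lt_trans _ rM) // (le_trans _ kr) //.
  by have := @eucl_coord R N (zvec k) i; rewrite mxE.
exists (\row_i (inord (absz (k 0 i + M%:Z)) : 'I_(M.*2).+1)) => //.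
apply/matrixP => i j; have kMj := kM j; rewrite !mxE (ord1 i) inordK; lia.
Qed.

Lemma tends_to_infty_eucl_gt {g} : tends_to_infty g -> forall r : R,
  \forall n \near \oo, r < eucl (zvec (g n) : 'rV[R]_N).
Proof.
move=> gi r; apply: filterS (gi _ (finite_eucl_le r)) => n /=.
by move/negP; rewrite -ltNge.
Qed.

Lemma tends_to_infty_comp {g} {phi : nat -> nat} :
  tends_to_infty g -> phi @ \oo --> \oo -> tends_to_infty (g \o phi).
Proof. by move=> gi phi_oo F /gi; exact: phi_oo. Qed.

Lemma zdir_cvg_subseq g : exists eta : 'rV[R]_N,
  exists2 phi : nat -> nat,
    phi @ \oo --> \oo & zdir (g (phi n)) @[n --> \oo] --> eta.
Proof.
have box_compact :=
  @rV_compact R N (fun=> `[-1, 1]%classic) (fun=> @segment_compact R (-1) 1).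
set box := [set v | _] in box_compact.
have dir_box : ((zdir \o g) @ \oo) box.
  by exists 0%N => // n _ i /=; rewrite in_itv /= -ler_norml normalize_coord_le1.
have [eta [_ eta_cluster]] := box_compact ((zdir \o g) @ \oo) _ dir_box.
by exists eta; exact: (@cluster_cvg_subseq R _ (zdir \o g)).
Qed.

Lemma cvg_zdir_tends_in_dir {g eta} : tends_to_infty g ->
  zdir (g n) @[n --> \oo] --> eta -> usphere R N eta /\ tends_in_dir eta g.
Proof.
move=> gi dir_eta.
have on_sphere : \forall n \near \oo, usphere R N (zdir (g n)).
  by apply: filterS (tends_to_infty_eucl_gt gi 0) => n; exact: eucl_normalize.
have eta_sphere : usphere R N eta.
  exact: closed_cvg _ (@closed_usphere R N) on_sphere _ dir_eta.
split=> //; split=> // r U r0 [_ U_open] U_eta.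
have [e e0 U_ball] := U_open eta U_eta.
have dist0 : eucl (zdir (g n) - eta) @[n --> \oo] --> (0 : R).
  rewrite -(eucl0 R N); apply: continuous_cvg; first exact: eucl_continuous.
  exact/subr_cvg0.
near=> n; split; first by near: n; exact: tends_to_infty_eucl_gt gi r.
apply: U_ball; first by near: n.
near: n; move/cvgrPdist_lt: dist0 => /(_ e e0); apply: filterS => n.
by rewrite sub0r normrN ger0_norm ?eucl_ge0.
Unshelve. all: by end_near. Qed.

End Integer_directions.

Theorem lemma6p2 (R : realType) (N : nat) (Omega : pseudoMetricType R)
  (Ohaus : hausdorff_space Omega) (Ocpt : compact [set: Omega])
  (alpha : 'rV[int]_N -> Omega -> Omega)
  (alpha_homeo : forall g, continuous (alpha g) /\
     exists beta : Omega -> Omega,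
       [/\ continuous beta, cancel (alpha g) beta & cancel beta (alpha g)])
  (alpha_add : forall g h, alpha (g + h) = alpha g \o alpha h)
  (omega : Omega) :
  Lset alpha omega = \bigcup_(eta in usphere R N) Ldir alpha eta omega.
Proof.
apply/seteqP; split=> [nu [g [g_oo g_nu]] | nu [eta _ [g [[g_oo _] g_nu]]]];
  last by exists g.
have [eta [phi phi_oo dir_eta]] := zdir_cvg_subseq (R := R) g.
have [eta_sphere g_eta] :=
  cvg_zdir_tends_in_dir (tends_to_infty_comp g_oo phi_oo) dir_eta.
exists eta => //; exists (g \o phi); split=> //.
exact: cvg_comp phi_oo g_nu.
Qed.
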